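(* Let $S(n)=(3n+1)/2^{v_2(3n+1)}$ be the odd-to-odd Syracuse map. Let $n=64q+57$ with $q\equiv 3\pmod 8$, and write $q=8m+3$ ($m\ge 0$ an integer), so $n=512m+249$. Then $S^k(n)\not\equiv 57\pmod{64}$ for $k=1,2,3,4$. Consequently, the minimum number of odd-to-odd steps needed to return to the residue class $57\bmod 64$ from this branch is at least $5$.
   Context: $v_2$ is the $2$-adic valuation; $S^k$ is the $k$-th iterate. *)

From mathcomp Require Import all_boot.

Definition syracuse (n : nat) : nat := (3 * n + 1) %/ 2 ^ (logn 2 (3 * n + 1)).

Definition syracuse_iter (k n : nat) : nat := iter k syracuse n.

From mathcomp Require Import all_boot.
From mathcomp Require Import zify.

(* On the progression 512m + 249 the first four Syracuse steps divide by 2^2, 2, 2^2, 2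
   independently of m, so the iterates are the affine functions 384m + 187, 576m + 281,
   432m + 211 and 648m + 317. Modulo 64 these are 59, 25, 48m + 19 (which is 3 mod 16)
   and 8m + 61 (which is 5 mod 8), none of which can be 57. *)

Lemma syracuseE n k y : 3 * n + 1 = 2 ^ k * y -> odd y -> syracuse n = y.
Proof.
move=> def3n odd_y; rewrite /syracuse def3n.
have y_gt0 : 0 < y by case: (y) odd_y.
rewrite lognM ?expn_gt0 // pfactorK // logn_coprime ?addn0 ?coprime2n //.
by rewrite mulKn ?expn_gt0.
Qed.

(* The evenness of c is what makes the valuation independent of m. *)
Lemma syracuse_affine a b c d k m :
  3 * a = 2 ^ k * c -> 3 * b + 1 = 2 ^ k * d -> ~~ odd c -> odd d ->
  syracuse (a * m + b) = c * m + d.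
Proof.
move=> def3a def3b even_c odd_d; apply: (@syracuseE _ k).
  by rewrite mulnDr -addnA def3b mulnA def3a -mulnA -mulnDr.
by rewrite oddD oddM (negbTE even_c) odd_d.
Qed.

Theorem mainTheorem7 (q m n : nat) :
  n = 64 * q + 57 -> q = 8 * m + 3 ->
  n = 512 * m + 249 /\
  (forall k, 1 <= k <= 4 -> syracuse_iter k n %% 64 != 57).
Proof.
move=> -> ->; have -> : 64 * (8 * m + 3) + 57 = 512 * m + 249 by lia.
split=> //.
have S1 : syracuse (512 * m + 249) = 384 * m + 187 by apply: (@syracuse_affine _ _ _ _ 2).
have S2 : syracuse (384 * m + 187) = 576 * m + 281 by apply: (@syracuse_affine _ _ _ _ 1).
have S3 : syracuse (576 * m + 281) = 432 * m + 211 by apply: (@syracuse_affine _ _ _ _ 2).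
have S4 : syracuse (432 * m + 211) = 648 * m + 317 by apply: (@syracuse_affine _ _ _ _ 1).
case=> [|[|[|[|[|k]]]]] // _; rewrite /syracuse_iter [iter _ _ _]/= ?S1 ?S2 ?S3 ?S4;
  apply/eqP; lia.
Qed.
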